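(* Let $\mathbb X=\langle X,\rho\rangle$ and $\mathbb Y=\langle Y,\sigma\rangle$ be structures of size $\omega_1$ with $\rho,\sigma$ equivalence relations, each having countably infinitely many singleton classes and exactly one class of size $n$ for each $n\ge2$, such that the only infinite class of $\mathbb X$ is a single class $X'$ with $|X'|=\omega_1$, and the infinite classes of $\mathbb Y$ are exactly two classes $Y',Y''$ with $|Y'|=|Y''|=\omega_1$. Then $\mathbb X\equiv\mathbb Y$, $\mathbb X\equiv_{\mathcal P_{\infty\omega}}\mathbb Y$, $\mathbb X\not\sim_c\mathbb Y$, and $\mathbb X\not\equiv_{\infty\omega}\mathbb Y$.
   Context: The language has one binary relation symbol $R$. A condensation from $\langle X,\rho\rangle$ onto $\langle Y,\sigma\rangle$ is a bijection $F:X\to Y$ with $x\,\rho\,x'\Rightarrow F(x)\,\sigma\,F(x')$; $\mathbb X\sim_c\mathbb Y$ means condensations exist in both directions. $\equiv$ is first order elementary equivalence, $\equiv_{\infty\omega}$ equivalence for all $L_{\infty\omega}$-sentences. $\mathcal P_0$ consists of all atomic formulas ($v_\alpha=v_\beta$, $R(v_\alpha,v_\beta)$) and all $\neg\,v_\alpha=v_\beta$; $\mathcal P_{\infty\omega}$ is the closure of $\mathcal P_0$ under $\forall v$, $\exists v$ and conjunctions and disjunctions of arbitrary sets of formulas (no negation); $\equiv_{\mathcal P_{\infty\omega}}$ means satisfying the same $\mathcal P_{\infty\omega}$-sentences. *)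

From Stdlib Require Import Arith.

Definition equipotent (A B : Type) : Prop :=
  exists f : A -> B, (forall x y, f x = f y -> x = y) /\ (forall b, exists a, f a = b).

Definition has_size (A : Type) (n : nat) : Prop := equipotent A {k : nat | k < n}.

Definition finite_type (A : Type) : Prop := exists n, has_size A n.

Definition countable (A : Type) : Prop :=
  exists f : A -> nat, forall x y, f x = f y -> x = y.

Definition countably_infinite (A : Type) : Prop := equipotent nat A.

(* |A| = omega_1 : A carries a well-ordering of order type omega_1, i.e. a
   strict well-order whose domain is uncountable but all of whose proper initial
   segments are countable. *)
Definition size_omega1 (A : Type) : Prop :=
  exists lt : A -> A -> Prop,
    (forall x, ~ lt x x) /\
    (forall x y z, lt x y -> lt y z -> lt x z) /\
    (forall x y, lt x y \/ x = y \/ lt y x) /\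
    well_founded lt /\
    ~ countable A /\
    (forall x, countable {y : A | lt y x}).

Definition is_equivalence {X : Type} (rho : X -> X -> Prop) : Prop :=
  (forall x, rho x x) /\ (forall x y, rho x y -> rho y x) /\
  (forall x y z, rho x y -> rho y z -> rho x z).

Definition cls {X : Type} (rho : X -> X -> Prop) (x : X) : Type := {y : X | rho x y}.

Definition singleton_pts {X : Type} (rho : X -> X -> Prop) : Type :=
  {x : X | forall y, rho x y -> y = x}.

Definition finite_classes_spec {X : Type} (rho : X -> X -> Prop) : Prop :=
  countably_infinite (singleton_pts rho) /\
  (forall n, 2 <= n ->
     exists x, has_size (cls rho x) n /\
       (forall x', has_size (cls rho x') n -> rho x x')).

Definition infinite_class {X : Type} (rho : X -> X -> Prop) (x : X) : Prop :=
  ~ finite_type (cls rho x).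

Definition condensation {X Y : Type} (rho : X -> X -> Prop) (sigma : Y -> Y -> Prop)
  (F : X -> Y) : Prop :=
  (forall x y, F x = F y -> x = y) /\ (forall b, exists a, F a = b) /\
  (forall x x', rho x x' -> sigma (F x) (F x')).

Definition condensable {X Y : Type} (rho : X -> X -> Prop) (sigma : Y -> Y -> Prop) : Prop :=
  exists F, condensation rho sigma F.

Definition bi_condensable {X Y : Type} (rho : X -> X -> Prop) (sigma : Y -> Y -> Prop) : Prop :=
  condensable rho sigma /\ condensable sigma rho.

Definition upd {X : Type} (a : nat -> X) (i : nat) (x : X) : nat -> X :=
  fun j => if Nat.eqb j i then x else a j.

Inductive fo : Type :=
| foEq  (i j : nat)
| foR   (i j : nat)
| foNot (p : fo)
| foAnd (p q : fo)
| foOr  (p q : fo)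
| foAll (i : nat) (p : fo)
| foEx  (i : nat) (p : fo).

Fixpoint fo_sat {X : Type} (rho : X -> X -> Prop) (a : nat -> X) (p : fo) : Prop :=
  match p with
  | foEq i j => a i = a j
  | foR i j => rho (a i) (a j)
  | foNot q => ~ fo_sat rho a q
  | foAnd q r => fo_sat rho a q /\ fo_sat rho a r
  | foOr q r => fo_sat rho a q \/ fo_sat rho a r
  | foAll i q => forall x, fo_sat rho (upd a i x) q
  | foEx i q => exists x, fo_sat rho (upd a i x) q
  end.

Inductive fo_free (v : nat) : fo -> Prop :=
| fofree_eq i j : (v = i \/ v = j) -> fo_free v (foEq i j)
| fofree_R i j : (v = i \/ v = j) -> fo_free v (foR i j)
| fofree_not p : fo_free v p -> fo_free v (foNot p)
| fofree_and1 p q : fo_free v p -> fo_free v (foAnd p q)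
| fofree_and2 p q : fo_free v q -> fo_free v (foAnd p q)
| fofree_or1 p q : fo_free v p -> fo_free v (foOr p q)
| fofree_or2 p q : fo_free v q -> fo_free v (foOr p q)
| fofree_all i p : v <> i -> fo_free v p -> fo_free v (foAll i p)
| fofree_ex i p : v <> i -> fo_free v p -> fo_free v (foEx i p).

Definition fo_sentence (p : fo) : Prop := forall v, ~ fo_free v p.

(* X ≡ Y : same first-order sentences (truth of a sentence = truth under every
   assignment; the structures considered are nonempty) *)
Definition elem_equiv {X Y : Type} (rho : X -> X -> Prop) (sigma : Y -> Y -> Prop) : Prop :=
  forall p, fo_sentence p ->
    ((forall a, fo_sat rho a p) <-> (forall b, fo_sat sigma b p)).

Inductive formula : Type :=
| fEq  (i j : nat)
| fR   (i j : nat)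
| fNot (p : formula)
| fAnd (I : Type) (ps : I -> formula)
| fOr  (I : Type) (ps : I -> formula)
| fAll (i : nat) (p : formula)
| fEx  (i : nat) (p : formula).

Fixpoint sat {X : Type} (rho : X -> X -> Prop) (a : nat -> X) (p : formula) : Prop :=
  match p with
  | fEq i j => a i = a j
  | fR i j => rho (a i) (a j)
  | fNot q => ~ sat rho a q
  | fAnd J ps => forall k : J, sat rho a (ps k)
  | fOr J ps => exists k : J, sat rho a (ps k)
  | fAll i q => forall x, sat rho (upd a i x) q
  | fEx i q => exists x, sat rho (upd a i x) q
  end.

Inductive free (v : nat) : formula -> Prop :=
| free_eq i j : (v = i \/ v = j) -> free v (fEq i j)
| free_R i j : (v = i \/ v = j) -> free v (fR i j)
| free_not p : free v p -> free v (fNot p)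
| free_and I ps k : free v (ps k) -> free v (fAnd I ps)
| free_or I ps k : free v (ps k) -> free v (fOr I ps)
| free_all i p : v <> i -> free v p -> free v (fAll i p)
| free_ex i p : v <> i -> free v p -> free v (fEx i p).

Definition sentence (p : formula) : Prop := forall v, ~ free v p.

Inductive positive : formula -> Prop :=
| pos_eq i j : positive (fEq i j)
| pos_R i j : positive (fR i j)
| pos_neq i j : positive (fNot (fEq i j))
| pos_and I ps : (forall k, positive (ps k)) -> positive (fAnd I ps)
| pos_or I ps : (forall k, positive (ps k)) -> positive (fOr I ps)
| pos_all i p : positive p -> positive (fAll i p)
| pos_ex i p : positive p -> positive (fEx i p).

Definition infeq {X Y : Type} (rho : X -> X -> Prop) (sigma : Y -> Y -> Prop) : Prop :=
  forall p, sentence p ->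
    ((forall a, sat rho a p) <-> (forall b, sat sigma b p)).

Definition pos_equiv {X Y : Type} (rho : X -> X -> Prop) (sigma : Y -> Y -> Prop) : Prop :=
  forall p, sentence p -> positive p ->
    ((forall a, sat rho a p) <-> (forall b, sat sigma b p)).

From Stdlib Require Import Arith Lia List Classical ClassicalEpsilon ProofIrrelevance Cantor.
Import ListNotations.

(* All four claims are read off class sizes. Both structures have infinitely many
   singletons, one class of each finite size [n >= 2], and classes of unbounded size, so an
   Ehrenfeucht-Fraisse game that keeps track of "the class has at least [n] elements" up to
   the remaining depth shows that they satisfy the same first-order sentences. Positive
   sentences only need injective partial homomorphisms, which exist in both directions:
   from [X], map [X'] into [Y'] and singletons into singletons or [Y'']; from [Y], map both
   [Y'] and [Y''] into [X']. A condensation of [X] onto [Y] sends [X'] into one class, so the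
   other uncountable class of [Y] would be the image of the countable finite part of [X].
   Finally, "there are two unrelated points with infinite classes" is an L_{infinity omega}
   sentence true in [Y] and false in [X]. *)

(** * Class sizes *)

Definition class_ge {A : Type} (R : A -> A -> Prop) (n : nat) (x : A) : Prop :=
  exists l : list A, NoDup l /\ length l = n /\ forall w, In w l -> R x w.

Definition class_size {A : Type} (R : A -> A -> Prop) (n : nat) (x : A) : Prop :=
  class_ge R n x /\ ~ class_ge R (S n) x.

Definition class_unbounded {A : Type} (R : A -> A -> Prop) (x : A) : Prop :=
  forall n, class_ge R n x.

Lemma sig_eq {A : Type} (P : A -> Prop) (u v : sig P) : proj1_sig u = proj1_sig v -> u = v.
Proof. destruct u, v; simpl; intros; subst; f_equal; apply proof_irrelevance. Qed.

Section ClassSizes.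
Context {A : Type} (R : A -> A -> Prop).

Lemma class_ge_0 x : class_ge R 0 x.
Proof. exists []; repeat split; [constructor | intros w []]. Qed.

Lemma class_ge_1 x : R x x -> class_ge R 1 x.
Proof.
  intro Hx. exists [x]. repeat split.
  - repeat constructor; intros [].
  - intros w [<-|[]]; exact Hx.
Qed.

Lemma class_ge_le n m x : class_ge R n x -> m <= n -> class_ge R m x.
Proof.
  intros H Hle. induction Hle as [|n Hle IH]; auto. apply IH.
  destruct H as [[|w l] [Hl [Hlen Hrel]]]; [discriminate|].
  exists l. apply NoDup_cons_iff in Hl. simpl in Hlen.
  repeat split; [tauto | lia | intros; apply Hrel; now right].
Qed.

Lemma exists_fresh n x (l : list A) :
  class_ge R n x -> length l < n -> exists w, R x w /\ ~ In w l.
Proof.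
  intros [k [Hk [Hlen Hrel]]] Hlt. apply NNPP; intro Hno.
  assert (incl k l).
  { intros w Hw. apply NNPP; intro Hw'. apply Hno. exists w; auto. }
  pose proof (NoDup_incl_length Hk H). lia.
Qed.

Lemma class_size_ge n m x : class_size R n x -> (class_ge R m x <-> m <= n).
Proof.
  intros [Hn HSn]; split; intro H.
  - destruct (le_lt_dec m n); auto. exfalso; apply HSn; eapply class_ge_le; eauto.
  - eapply class_ge_le; eauto.
Qed.

Lemma class_size_unique n m x : class_size R n x -> class_size R m x -> n = m.
Proof.
  intros Hn Hm.
  pose proof (proj1 (class_size_ge _ n _ Hm) (proj1 Hn)).
  pose proof (proj1 (class_size_ge _ m _ Hn) (proj1 Hm)). lia.
Qed.

Lemma class_ge_or_size T x : class_ge R T x \/ exists s, s < T /\ class_size R s x.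
Proof.
  induction T as [|T [H|[s [Hs H]]]]; [left; apply class_ge_0| |].
  - destruct (classic (class_ge R (S T) x)); auto. right; exists T; split; [lia|split; auto].
  - right; exists s; split; [lia|auto].
Qed.

Lemma unbounded_or_size x : R x x -> class_unbounded R x \/ exists n, 1 <= n /\ class_size R n x.
Proof.
  intro Hx. destruct (classic (class_unbounded R x)) as [|Hb]; auto. right.
  apply not_all_ex_not in Hb as [n Hn].
  destruct (class_ge_or_size n x) as [|[[|s] [_ Hs]]]; [tauto| |exists (S s); split; [lia|auto]].
  exfalso. apply (proj2 Hs), class_ge_1, Hx.
Qed.

Lemma class_size_1_eq x w : class_size R 1 x -> R x w -> R x x -> w = x.
Proof.
  intros [_ H] Hw Hx. apply NNPP; intro Hne. apply H. exists [w; x]. repeat split.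
  - constructor; [simpl; intuition|repeat constructor; intros []].
  - intros v [<-|[<-|[]]]; auto.
Qed.

Lemma class_size_list n x : class_size R n x ->
  exists l, NoDup l /\ length l = n /\ forall w, R x w <-> In w l.
Proof.
  intros [[l [Hl [Hlen Hrel]]] HSn]. exists l; repeat split; auto.
  intros Hw. apply NNPP; intro Hn. apply HSn. exists (w :: l).
  repeat split; [constructor; auto | simpl; lia | intros v [<-|Hv]; auto].
Qed.

Hypothesis HR : is_equivalence R.

Lemma class_ge_rel n x x' : R x x' -> class_ge R n x -> class_ge R n x'.
Proof.
  destruct HR as [_ [Hsym Htr]]. intros Hx [l [Hl [Hlen Hrel]]].
  exists l; repeat split; eauto.
Qed.

Lemma class_size_rel n x x' : R x x' -> class_size R n x -> class_size R n x'.
Proof.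
  pose proof HR as [_ [Hsym _]]. intros Hx [Hn HSn]. split.
  - eapply class_ge_rel; eauto.
  - intro H; apply HSn. eapply class_ge_rel; eauto.
Qed.

Lemma class_unbounded_rel x x' : R x x' -> class_unbounded R x -> class_unbounded R x'.
Proof. intros Hx H n. eapply class_ge_rel; eauto. Qed.

Lemma unbounded_not_size x x' n : class_unbounded R x -> R x x' -> ~ class_size R n x'.
Proof. intros H Hx [_ Hn]. apply Hn. eapply class_unbounded_rel; eauto. Qed.

End ClassSizes.

Lemma equipotent_of_bijection {A B} (g : B -> A) :
  (forall b b', g b = g b' -> b = b') -> (forall a, exists b, g b = a) -> equipotent A B.
Proof.
  intros Hinj Hsurj.
  exists (fun a => proj1_sig (constructive_indefinite_description _ (Hsurj a))). split.
  - intros a a'.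
    destruct (constructive_indefinite_description _ (Hsurj a)) as [b <-].
    destruct (constructive_indefinite_description _ (Hsurj a')) as [b' <-].
    simpl; congruence.
  - intro b. exists (g b).
    destruct (constructive_indefinite_description _ (Hsurj (g b))) as [b' Hb']. simpl; auto.
Qed.

Section Cardinalities.
Context {A : Type} (R : A -> A -> Prop).

Lemma has_size_class_size n x : has_size (cls R x) n -> class_size R n x.
Proof.
  intros [f [Hinj Hsurj]]. split.
  - assert (Hpre : forall m, m <= n -> exists l, NoDup l /\ length l = m /\
        forall w, In w l -> exists H : R x w, proj1_sig (f (exist _ w H)) < m).
    { induction m as [|m IH]; intro Hle.
      - exists []; repeat split; [constructor|intros _ []].
      - destruct IH as [l [Hl [Hlen Hlow]]]; [lia|].
        assert (Hmn : m < n) by lia.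
        destruct (Hsurj (exist _ m Hmn)) as [[w Hw] Hfw].
        exists (w :: l). repeat split.
        + constructor; auto. intros [Hw' Hlt]%Hlow.
          assert (Hsame : exist _ w Hw' = exist (fun y => R x y) w Hw) by now apply sig_eq.
          rewrite Hsame, Hfw in Hlt; simpl in Hlt; lia.
        + simpl; lia.
        + intros v [<-|Hv].
          * exists Hw. rewrite Hfw; simpl; lia.
          * destruct (Hlow v Hv) as [Hv' Hlt]; exists Hv'; lia. }
    destruct (Hpre n (le_n n)) as [l [Hl [Hlen Hlow]]].
    exists l; repeat split; auto. intros w Hw; now destruct (Hlow w Hw).
  - intros [l [Hl [Hlen Hrel]]].
    set (code := fun w => match excluded_middle_informative (R x w) with
                          | left H => proj1_sig (f (exist _ w H)) | right _ => 0 end).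
    assert (Hcodes : NoDup (map code l)).
    { apply NoDup_map_NoDup_ForallPairs; auto. intros a b Ha Hb. unfold code.
      destruct (excluded_middle_informative (R x a)) as [Ra|Ra]; [|exfalso; auto].
      destruct (excluded_middle_informative (R x b)) as [Rb|Rb]; [|exfalso; auto].
      intros Heq%sig_eq%Hinj. now inversion Heq. }
    assert (Hbound : incl (map code l) (seq 0 n)).
    { intros k [w [<- Hw]]%in_map_iff. apply in_seq. unfold code.
      destruct (excluded_middle_informative (R x w)) as [Rw|]; [|exfalso; auto].
      pose proof (proj2_sig (f (exist _ w Rw))). simpl in *. lia. }
    pose proof (NoDup_incl_length Hcodes Hbound) as Hle.
    rewrite length_map, length_seq in Hle. lia.
Qed.

Lemma class_size_has_size n x : class_size R n x -> has_size (cls R x) n.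
Proof.
  intros Hsize. destruct (class_size_list R n x Hsize) as [l [Hl [Hlen Hall]]].
  assert (Hnth : forall k, k < n -> R x (nth k l x)) by (intros; apply Hall, nth_In; lia).
  apply (equipotent_of_bijection
           (fun k : {k | k < n} => exist (R x) (nth (proj1_sig k) l x) (Hnth _ (proj2_sig k)))).
  - intros [a Ha] [b Hb] Heq%(f_equal (@proj1_sig _ _)). apply sig_eq; simpl in *.
    eapply NoDup_nth; eauto; lia.
  - intros [w Hw]. destruct (In_nth l w x (proj1 (Hall w) Hw)) as [k [Hk Hkw]].
    assert (Hkn : k < n) by lia. exists (exist _ k Hkn). now apply sig_eq.
Qed.

Lemma size_omega1_unbounded x : R x x -> size_omega1 (cls R x) -> class_unbounded R x.
Proof.
  intros Hx [lt [_ [_ [_ [_ [Hunc _]]]]]] n.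
  destruct (class_ge_or_size R n x) as [|[s [_ Hs]]]; auto. exfalso. apply Hunc.
  destruct (class_size_has_size s x Hs) as [f [Hinj _]].
  exists (fun c => proj1_sig (f c)). intros a b Hab. now apply Hinj, sig_eq.
Qed.

Lemma unbounded_infinite_class x : class_unbounded R x -> infinite_class R x.
Proof. intros H [n Hn%has_size_class_size]. apply (proj2 Hn), H. Qed.

End Cardinalities.

Lemma injection_avoids_list {A} (f : nat -> A) (l : list A) :
  (forall i j, f i = f j -> i = j) -> exists k, ~ In (f k) l.
Proof.
  intros Hinj. apply NNPP; intro Hno.
  assert (Hincl : incl (map f (seq 0 (S (length l)))) l).
  { intros y [k [<- _]]%in_map_iff. apply NNPP; intro; apply Hno; eauto. }
  apply NoDup_incl_length in Hincl.
  - rewrite length_map, length_seq in Hincl. lia.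
  - apply NoDup_map_NoDup_ForallPairs; [intros i j _ _; apply Hinj | apply seq_NoDup].
Qed.

(* The finite-class part of [finite_classes_spec] in first-order terms; countability of
   the singletons is only needed for [no_condensation]. *)
Record standard {A : Type} (R : A -> A -> Prop) : Prop := {
  std_equiv : is_equivalence R;
  std_singleton : forall l : list A, exists y, class_size R 1 y /\ ~ In y l;
  std_size : forall n, 2 <= n -> exists x, class_size R n x;
  std_size_unique : forall n x x', 2 <= n -> class_size R n x -> class_size R n x' -> R x x' }.

Section Standard.
Context {A : Type} (R : A -> A -> Prop).

Lemma finite_classes_spec_standard : is_equivalence R -> finite_classes_spec R -> standard R.
Proof.
  intros HR [[f [Hfinj _]] Hsizes]. pose proof HR as [Hrefl [Hsym Htr]]. constructor; auto.
  - intro l. destruct (injection_avoids_list (fun k => proj1_sig (f k)) l) as [k Hk].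
    { intros i j Hij. now apply Hfinj, sig_eq. }
    exists (proj1_sig (f k)). split; auto. destruct (f k) as [y Hy]; simpl in *.
    apply has_size_class_size. exists (fun _ => exist (fun k => k < 1) 0 (Nat.lt_0_1)). split.
    + intros [a Ha] [b Hb] _. apply sig_eq; simpl. now rewrite (Hy a Ha), (Hy b Hb).
    + intros [[|b] Hb]; [|lia]. exists (exist _ y (Hrefl y)). now apply sig_eq.
  - intros n Hn. destruct (Hsizes n Hn) as [x [Hx _]]. exists x; now apply has_size_class_size.
  - intros n x x' Hn Hx Hx'. destruct (Hsizes n Hn) as [z [_ Hz]].
    apply Htr with z; [apply Hsym|]; apply Hz, class_size_has_size; auto.
Qed.

Lemma list_sizes_bounded (l : list A) :
  exists N, forall w n, In w l -> class_size R n w -> n <= N.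
Proof.
  induction l as [|w l [N HN]]; [exists 0; intros _ _ []|].
  destruct (classic (exists n, class_size R n w)) as [[n Hn]|Hnone].
  - exists (max n N). intros w' m [<-|Hw'] Hm.
    + rewrite (class_size_unique R _ _ _ Hm Hn). lia.
    + specialize (HN w' m Hw' Hm). lia.
  - exists N. intros w' m [<-|Hw'] Hm; [exfalso; eauto | eauto].
Qed.

Hypothesis HR : standard R.

Lemma exists_large_unrelated (l : list A) T :
  exists y, class_ge R T y /\ forall w, In w l -> ~ R y w.
Proof.
  destruct (list_sizes_bounded l) as [N HN].
  destruct (std_size R HR (S (S (max N T)))) as [y Hy]; [lia|].
  exists y. split.
  - apply (class_size_ge R _ T y Hy). lia.
  - intros w Hw Hyw. pose proof (class_size_rel R (std_equiv R HR) _ _ _ Hyw Hy) as Hsize.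
    specialize (HN w _ Hw Hsize). lia.
Qed.

End Standard.

(** * Ehrenfeucht-Fraisse games *)

Definition pairing_injective {A B} (L : list (A * B)) : Prop :=
  forall p q, In p L -> In q L -> (fst p = fst q <-> snd p = snd q).

Definition swap_pairs {A B} (L : list (A * B)) : list (B * A) :=
  map (fun p => (snd p, fst p)) L.

Section Pairings.
Context {A B : Type}.
Implicit Types (L : list (A * B)) (x : A) (y : B).

Lemma pairing_injective_cons L x y :
  pairing_injective L -> ~ In x (map fst L) -> ~ In y (map snd L) ->
  pairing_injective ((x, y) :: L).
Proof.
  intros HL Hx Hy p q [<-|Hp] [<-|Hq]; simpl; try tauto.
  - split; intros ->; exfalso; [apply Hx|apply Hy]; apply in_map; auto.
  - split; intros <-; exfalso; [apply Hx|apply Hy]; apply in_map; auto.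
  - apply HL; auto.
Qed.

Lemma NoDup_cons_pair L x y : NoDup L -> ~ In x (map fst L) -> NoDup ((x, y) :: L).
Proof. intros HL Hx. constructor; auto. intro Hin. apply Hx, (in_map fst _ _ Hin). Qed.

Lemma in_swap_pairs L p : In p (swap_pairs L) <-> In (snd p, fst p) L.
Proof.
  unfold swap_pairs. rewrite in_map_iff. split.
  - intros [[a b] [<- H]]. exact H.
  - intro H. exists (snd p, fst p). destruct p; auto.
Qed.

Lemma length_swap_pairs L : length (swap_pairs L) = length L.
Proof. apply length_map. Qed.

Lemma NoDup_swap_pairs L : NoDup L -> NoDup (swap_pairs L).
Proof. apply NoDup_map_NoDup_ForallPairs. intros [a b] [c d] _ _ E. now inversion E. Qed.

Lemma pairing_injective_swap_pairs L : pairing_injective L -> pairing_injective (swap_pairs L).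
Proof.
  intros HL p q Hp%in_swap_pairs Hq%in_swap_pairs. specialize (HL _ _ Hp Hq). simpl in HL. tauto.
Qed.

End Pairings.

Lemma fresh_partner {A B} (R : A -> A -> Prop) (Sg : B -> B -> Prop) (L : list (A * B)) x y0 :
  is_equivalence R -> NoDup L -> pairing_injective L -> ~ In x (map fst L) ->
  (forall m, m <= S (length L) -> class_ge R m x -> class_ge Sg m y0) ->
  (forall q, In q L -> Sg y0 (snd q) -> R x (fst q)) ->
  exists y, Sg y0 y /\ ~ In y (map snd L).
Proof.
  intros [Hrefl _] HN Hinj Hx Hge Hback.
  set (C := filter (fun q => if excluded_middle_informative (R x (fst q)) then true else false) L).
  assert (HC : forall q, In q C <-> In q L /\ R x (fst q)).
  { intro q. unfold C. rewrite filter_In.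
    destruct (excluded_middle_informative (R x (fst q))); intuition congruence. }
  (* With [x], the first components of [C] give [length C + 1] points in the class of [x],
     hence as many in the class of [y0], of which [L] uses only [length C]. *)
  assert (HxC : class_ge R (S (length C)) x).
  { exists (x :: map fst C). repeat split.
    - constructor.
      + intros [q [<- Hq%HC]]%in_map_iff. apply Hx, in_map. tauto.
      + apply NoDup_map_NoDup_ForallPairs; [|apply NoDup_filter; auto].
        intros [a b] [a' b'] Ha%HC Hb%HC Heq. simpl in Heq.
        assert (b = b') by (apply (Hinj (a, b) (a', b')); tauto). now subst.
    - simpl; now rewrite length_map.
    - intros w [<-|[q [<- Hq%HC]]%in_map_iff]; [apply Hrefl | tauto]. }
  apply Hge in HxC; [|pose proof (filter_length_le _ L : length C <= length L); lia].
  destruct (exists_fresh Sg _ y0 (map snd C) HxC) as [y [Hy Hfresh]]; [rewrite length_map; lia|].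
  exists y; split; auto. intros [q [<- Hq]]%in_map_iff.
  apply Hfresh, in_map, HC. split; auto.
Qed.

(* Partial isomorphisms that also preserve "the class has at least [n] elements" for
   [n <= T]; [T] shrinks as the Ehrenfeucht-Fraisse game proceeds. *)
Record partial_iso {A B} (R : A -> A -> Prop) (Sg : B -> B -> Prop) (T : nat)
    (L : list (A * B)) : Prop := {
  pi_nodup : NoDup L;
  pi_inj : pairing_injective L;
  pi_rel : forall p q, In p L -> In q L -> (R (fst p) (fst q) <-> Sg (snd p) (snd q));
  pi_ge : forall p n, In p L -> n <= T -> (class_ge R n (fst p) <-> class_ge Sg n (snd p)) }.

Lemma partial_iso_swap {A B} (R : A -> A -> Prop) (Sg : B -> B -> Prop) T L :
  partial_iso R Sg T L -> partial_iso Sg R T (swap_pairs L).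
Proof.
  intros [HN Hinj Hrel Hge]. constructor.
  - now apply NoDup_swap_pairs.
  - now apply pairing_injective_swap_pairs.
  - intros p q Hp%in_swap_pairs Hq%in_swap_pairs. specialize (Hrel _ _ Hp Hq). simpl in Hrel. tauto.
  - intros p n Hp%in_swap_pairs Hn. specialize (Hge _ _ Hp Hn). simpl in Hge. tauto.
Qed.

Section PartialIso.
Context {A B : Type} (R : A -> A -> Prop) (Sg : B -> B -> Prop).
Hypotheses (HR : standard R) (HS : standard Sg).

Definition partner T (L : list (A * B)) x y : Prop :=
  ~ In y (map snd L) /\
  (forall q, In q L -> (R x (fst q) <-> Sg y (snd q))) /\
  (forall n, n <= T -> (class_ge R n x <-> class_ge Sg n y)).

Lemma partial_iso_cons T L x y :
  partial_iso R Sg T L -> ~ In x (map fst L) -> partner T L x y ->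
  partial_iso R Sg T ((x, y) :: L).
Proof.
  pose proof (std_equiv R HR) as [Rrefl [Rsym _]]. pose proof (std_equiv Sg HS) as [Srefl [Ssym _]].
  intros [HN Hinj Hrel Hge] Hx [Hy [Hxy Hn]]. constructor.
  - now apply NoDup_cons_pair.
  - now apply pairing_injective_cons.
  - intros p q [<-|Hp] [<-|Hq]; simpl; auto; [split; auto|].
    split; intro; [apply Ssym, Hxy, Rsym | apply Rsym, Hxy, Ssym]; auto.
  - intros p n [<-|Hp] Hle; simpl; auto.
Qed.

Lemma partial_iso_le T T' L : T' <= T -> partial_iso R Sg T L -> partial_iso R Sg T' L.
Proof. intros Hle [HN Hinj Hrel Hge]. constructor; auto. intros; apply Hge; auto; lia. Qed.

Lemma partial_iso_size T L q s :
  partial_iso R Sg T L -> In q L -> S s <= T ->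
  class_size Sg s (snd q) -> class_size R s (fst q).
Proof.
  intros HL Hq Hs [Hge HnotS]. split.
  - apply (pi_ge _ _ _ _ HL); auto; lia.
  - rewrite (pi_ge _ _ _ _ HL); auto.
Qed.

Lemma partner_of_related T L x p0 :
  partial_iso R Sg T L -> S (length L) <= T -> ~ In x (map fst L) ->
  In p0 L -> R (fst p0) x -> exists y, partner T L x y.
Proof.
  pose proof (std_equiv R HR) as HRe. pose proof HRe as [Rrefl [Rsym Rtr]].
  pose proof (std_equiv Sg HS) as HSe. pose proof HSe as [Srefl [Ssym Str]].
  intros HL HT Hx Hp0 Hp0x.
  destruct (fresh_partner R Sg L x (snd p0) HRe (pi_nodup _ _ _ _ HL) (pi_inj _ _ _ _ HL) Hx)
    as [y [Hy Hfresh]].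
  - intros m Hm Hxm. apply (pi_ge _ _ _ _ HL); auto; [lia|].
    apply (class_ge_rel R HRe m x); auto.
  - intros q Hq Hyq. apply Rtr with (fst p0); auto. apply (pi_rel _ _ _ _ HL); auto.
  - exists y. repeat split; auto.
    + intros Hxq. apply Str with (snd p0); auto. apply (pi_rel _ _ _ _ HL); eauto.
    + intros Hyq. apply Rtr with (fst p0); auto. apply (pi_rel _ _ _ _ HL); eauto.
    + intros Hxn. apply (class_ge_rel Sg HSe n (snd p0)); auto. apply (pi_ge _ _ _ _ HL); auto.
      apply (class_ge_rel R HRe n x); auto.
    + intros Hyn. apply (class_ge_rel R HRe n (fst p0)); auto. apply (pi_ge _ _ _ _ HL); auto.
      apply (class_ge_rel Sg HSe n y); auto.
Qed.

Lemma partner_of_unrelated T L x :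
  partial_iso R Sg T L -> (forall q, In q L -> ~ R x (fst q)) -> exists y, partner T L x y.
Proof.
  pose proof (std_equiv R HR) as HRe. pose proof HRe as [Rrefl _].
  pose proof (std_equiv Sg HS) as HSe. pose proof HSe as [Srefl _].
  intros HL Hunrel.
  assert (Hpartner : forall y, (forall q, In q L -> ~ Sg y (snd q)) ->
            (forall n, n <= T -> (class_ge R n x <-> class_ge Sg n y)) -> partner T L x y).
  { intros y Hy Hn. split; [|split; [|exact Hn]].
    - intros [q [<- Hq]]%in_map_iff. exact (Hy q Hq (Srefl _)).
    - intros q Hq; split; intro; exfalso; [eapply Hunrel | eapply Hy]; eauto. }
  destruct (class_ge_or_size R T x) as [HxT|[s [HsT Hxs]]].
  - destruct (exists_large_unrelated Sg HS (map snd L) T) as [y [HyT Hy]].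
    exists y. apply Hpartner.
    + intros q Hq. apply Hy, in_map, Hq.
    + split; intros; eapply class_ge_le; eauto.
  - assert (Hy : exists y, class_size Sg s y /\ forall q, In q L -> ~ Sg y (snd q)).
    { destruct s as [|[|s]].
      - exfalso. apply (proj2 Hxs), class_ge_1, Rrefl.
      - destruct (std_singleton Sg HS (map snd L)) as [y [Hy Hfresh]].
        exists y. split; auto. intros q Hq Hyq. apply Hfresh.
        rewrite <- (class_size_1_eq Sg y (snd q) Hy Hyq (Srefl y)). apply in_map, Hq.
      - destruct (std_size Sg HS (S (S s))) as [y Hy]; [lia|].
        exists y. split; auto. intros q Hq Hyq. apply (Hunrel q Hq).
        apply (std_size_unique R HR (S (S s))); [lia | exact Hxs |].
        apply (partial_iso_size T L); auto. eapply class_size_rel; eauto. }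
    destruct Hy as [y [Hys Hy]]. exists y. apply Hpartner; auto.
    intros n _. rewrite (class_size_ge R s n x Hxs), (class_size_ge Sg s n y Hys). tauto.
Qed.

Lemma partial_iso_forth k L x :
  partial_iso R Sg (S k + length L) L ->
  exists y L', partial_iso R Sg (k + length L') L' /\ In (x, y) L' /\ incl L L'.
Proof.
  intros HL. destruct (classic (In x (map fst L))) as [[p [<- Hp]]%in_map_iff|Hx].
  { exists (snd p), L. split; [|split; [|apply incl_refl]].
    { eapply partial_iso_le; [|exact HL]; lia. }
    now destruct p. }
  assert (Hy : exists y, partner (S k + length L) L x y).
  { destruct (classic (exists p, In p L /\ R (fst p) x)) as [[p0 [Hp0 Hp0x]]|Hno].
    - apply (partner_of_related _ _ _ p0); auto; lia.
    - apply partner_of_unrelated; auto. intros q Hq Hxq. apply Hno. exists q.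
      split; auto. now apply (std_equiv R HR). }
  destruct Hy as [y Hy]. exists y, ((x, y) :: L). split; [|split].
  - simpl. replace (k + S (length L)) with (S k + length L) by lia.
    now apply partial_iso_cons.
  - now left.
  - intros p Hp; now right.
Qed.

End PartialIso.

Lemma partial_iso_back {A B} (R : A -> A -> Prop) (Sg : B -> B -> Prop) k L y :
  standard R -> standard Sg -> partial_iso R Sg (S k + length L) L ->
  exists x L', partial_iso R Sg (k + length L') L' /\ In (x, y) L' /\ incl L L'.
Proof.
  intros HR HS HL.
  destruct (partial_iso_forth Sg R HS HR k (swap_pairs L) y) as [x [L' [HL' [Hyx Hincl]]]].
  { rewrite length_swap_pairs. now apply partial_iso_swap. }
  exists x, (swap_pairs L'). split; [|split].
  - rewrite length_swap_pairs. now apply partial_iso_swap.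
  - now apply in_swap_pairs.
  - intros p Hp. apply in_swap_pairs, Hincl, in_swap_pairs. now destruct p.
Qed.

Fixpoint fo_depth (p : fo) : nat :=
  match p with
  | foEq _ _ | foR _ _ => 0
  | foNot q => fo_depth q
  | foAnd q r | foOr q r => max (fo_depth q) (fo_depth r)
  | foAll _ q | foEx _ q => S (fo_depth q)
  end.

Definition ef_position {A B} (R : A -> A -> Prop) (Sg : B -> B -> Prop) (k : nat)
    (a : nat -> A) (b : nat -> B) : Prop :=
  exists L, partial_iso R Sg (k + length L) L /\ forall i, In (a i, b i) L.

Lemma upd_in_pairs {A B} (L : list (A * B)) a b i x y :
  (forall j, In (a j, b j) L) -> In (x, y) L -> forall j, In (upd a i x j, upd b i y j) L.
Proof. intros Hab Hxy j. unfold upd. now destruct (Nat.eqb j i). Qed.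

Section EhrenfeuchtFraisse.
Context {A B : Type} (R : A -> A -> Prop) (Sg : B -> B -> Prop).
Hypotheses (HR : standard R) (HS : standard Sg).

Lemma ef_forth k a b i x :
  ef_position R Sg (S k) a b -> exists y, ef_position R Sg k (upd a i x) (upd b i y).
Proof.
  intros [L [HL Hab]]. destruct (partial_iso_forth R Sg HR HS k L x HL) as [y [L' [HL' [Hxy Hincl]]]].
  exists y, L'. split; auto. apply upd_in_pairs; auto.
Qed.

Lemma ef_back k a b i y :
  ef_position R Sg (S k) a b -> exists x, ef_position R Sg k (upd a i x) (upd b i y).
Proof.
  intros [L [HL Hab]]. destruct (partial_iso_back R Sg k L y HR HS HL) as [x [L' [HL' [Hxy Hincl]]]].
  exists x, L'. split; auto. apply upd_in_pairs; auto.
Qed.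

Lemma ef_position_fo_sat p : forall k a b, fo_depth p <= k -> ef_position R Sg k a b ->
  (fo_sat R a p <-> fo_sat Sg b p).
Proof.
  induction p as [i j|i j|p IH|p IHp q IHq|p IHp q IHq|i p IH|i p IH];
    intros k a b Hk Hpos; simpl in *.
  - destruct Hpos as [L [HL Hab]]. exact (pi_inj _ _ _ _ HL _ _ (Hab i) (Hab j)).
  - destruct Hpos as [L [HL Hab]]. exact (pi_rel _ _ _ _ HL _ _ (Hab i) (Hab j)).
  - now rewrite (IH k a b).
  - rewrite (IHp k a b), (IHq k a b); auto; [tauto|lia|lia].
  - rewrite (IHp k a b), (IHq k a b); auto; [tauto|lia|lia].
  - destruct k as [|k]; [lia|]. split.
    + intros Ha y. destruct (ef_back k a b i y Hpos) as [x Hxy].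
      apply (IH k (upd a i x)); auto; lia.
    + intros Hb x. destruct (ef_forth k a b i x Hpos) as [y Hxy].
      apply (IH k _ (upd b i y)); auto; lia.
  - destruct k as [|k]; [lia|]. split.
    + intros [x Ha]. destruct (ef_forth k a b i x Hpos) as [y Hxy].
      exists y. apply (IH k (upd a i x)); auto; lia.
    + intros [y Hb]. destruct (ef_back k a b i y Hpos) as [x Hxy].
      exists x. apply (IH k _ (upd b i y)); auto; lia.
Qed.

End EhrenfeuchtFraisse.

Lemma upd_agree {A} (a a' : nat -> A) i x (P : nat -> Prop) :
  (forall v, v <> i -> P v -> a v = a' v) -> forall v, P v -> upd a i x v = upd a' i x v.
Proof. intros H v Hv. unfold upd. destruct (Nat.eqb_spec v i); auto. Qed.

Lemma fo_sat_free_agree {A} (R : A -> A -> Prop) p : forall a a',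
  (forall v, fo_free v p -> a v = a' v) -> (fo_sat R a p <-> fo_sat R a' p).
Proof.
  induction p as [i j|i j|p IH|p IHp q IHq|p IHp q IHq|i p IH|i p IH]; intros a a' Hag; simpl.
  - rewrite (Hag i), (Hag j); [tauto| |]; constructor; auto.
  - rewrite (Hag i), (Hag j); [tauto| |]; constructor; auto.
  - rewrite (IH a a'); [tauto|]. intros v Hv; apply Hag; now constructor.
  - rewrite (IHp a a'), (IHq a a'); [tauto| |]; intros v Hv; apply Hag;
      [apply fofree_and2 | apply fofree_and1]; auto.
  - rewrite (IHp a a'), (IHq a a'); [tauto| |]; intros v Hv; apply Hag;
      [apply fofree_or2 | apply fofree_or1]; auto.
  - assert (Hx : forall x, fo_sat R (upd a i x) p <-> fo_sat R (upd a' i x) p).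
    { intro x. apply IH, (upd_agree _ _ _ _ (fun v => fo_free v p)).
      intros v Hvi Hv. apply Hag. now constructor. }
    split; intros H x; apply Hx, H.
  - assert (Hx : forall x, fo_sat R (upd a i x) p <-> fo_sat R (upd a' i x) p).
    { intro x. apply IH, (upd_agree _ _ _ _ (fun v => fo_free v p)).
      intros v Hvi Hv. apply Hag. now constructor. }
    split; intros [x H]; exists x; apply Hx, H.
Qed.

Lemma fo_sentence_transfer {A B} (R : A -> A -> Prop) (Sg : B -> B -> Prop) p :
  standard R -> standard Sg -> fo_sentence p ->
  (forall a, fo_sat R a p) -> forall b, fo_sat Sg b p.
Proof.
  intros HR HS Hp Ha b.
  rewrite (fo_sat_free_agree Sg p b (fun _ => b 0)) by (intros v Hv; destruct (Hp v Hv)).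
  destruct (partial_iso_back R Sg (fo_depth p) [] (b 0) HR HS) as [x [L [HL [Hx _]]]].
  { constructor; [constructor | intros ? ? [] | intros ? ? [] | intros ? ? []]. }
  apply (ef_position_fo_sat R Sg HR HS p (fo_depth p) (fun _ => x)); auto. now exists L.
Qed.

Lemma standard_elem_equiv {A B} (R : A -> A -> Prop) (Sg : B -> B -> Prop) :
  standard R -> standard Sg -> elem_equiv R Sg.
Proof. intros HR HS p Hp. split; now apply fo_sentence_transfer. Qed.

(** * Positive sentences *)

Lemma sat_free_agree {A} (R : A -> A -> Prop) p : forall a a',
  (forall v, free v p -> a v = a' v) -> (sat R a p <-> sat R a' p).
Proof.
  induction p as [i j|i j|p IH|I ps IH|I ps IH|i p IH|i p IH]; intros a a' Hag; simpl.
  - rewrite (Hag i), (Hag j); [tauto| |]; constructor; auto.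
  - rewrite (Hag i), (Hag j); [tauto| |]; constructor; auto.
  - rewrite (IH a a'); [tauto|]. intros v Hv; apply Hag; now constructor.
  - assert (Hk : forall k, sat R a (ps k) <-> sat R a' (ps k)).
    { intro k. apply IH. intros v Hv. apply Hag. econstructor; eauto. }
    split; intros H k; apply Hk, H.
  - assert (Hk : forall k, sat R a (ps k) <-> sat R a' (ps k)).
    { intro k. apply IH. intros v Hv. apply Hag. econstructor; eauto. }
    split; intros [k H]; exists k; apply Hk, H.
  - assert (Hx : forall x, sat R (upd a i x) p <-> sat R (upd a' i x) p).
    { intro x. apply IH, (upd_agree _ _ _ _ (fun v => free v p)).
      intros v Hvi Hv. apply Hag. now constructor. }
    split; intros H x; apply Hx, H.
  - assert (Hx : forall x, sat R (upd a i x) p <-> sat R (upd a' i x) p).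
    { intro x. apply IH, (upd_agree _ _ _ _ (fun v => free v p)).
      intros v Hvi Hv. apply Hag. now constructor. }
    split; intros [x H]; exists x; apply Hx, H.
Qed.

(* Finite injective partial maps inside [M]; for positive formulas these play the role
   that partial isomorphisms play for arbitrary ones. *)
Definition matching {A B} (M : A -> B -> Prop) (L : list (A * B)) : Prop :=
  NoDup L /\ pairing_injective L /\ forall p, In p L -> M (fst p) (snd p).

Definition forth_closed {A B} (M : A -> B -> Prop) : Prop :=
  forall L x, matching M L -> ~ In x (map fst L) -> exists y, ~ In y (map snd L) /\ M x y.

Lemma matching_swap {A B} (M : A -> B -> Prop) L :
  matching M L -> matching (fun y x => M x y) (swap_pairs L).
Proof.
  intros [HN [Hinj HM]]. split; [|split].
  - now apply NoDup_swap_pairs.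
  - now apply pairing_injective_swap_pairs.
  - intros p Hp%in_swap_pairs. exact (HM _ Hp).
Qed.

Lemma matching_extend {A B} (M : A -> B -> Prop) L x :
  forth_closed M -> matching M L ->
  exists y L', matching M L' /\ In (x, y) L' /\ incl L L'.
Proof.
  intros Hforth HL. destruct (classic (In x (map fst L))) as [[p [<- Hp]]%in_map_iff|Hx].
  { exists (snd p), L. split; [auto|split; [now destruct p | apply incl_refl]]. }
  destruct (Hforth L x HL Hx) as [y [Hy Hxy]]. destruct HL as [HN [Hinj HM]].
  exists y, ((x, y) :: L). split; [|split; [now left | intros p Hp; now right]].
  split; [now apply NoDup_cons_pair|split; [now apply pairing_injective_cons|]].
  intros p [<-|Hp]; auto.
Qed.

Lemma matching_extend_back {A B} (M : A -> B -> Prop) L y :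
  forth_closed (fun y x => M x y) -> matching M L ->
  exists x L', matching M L' /\ In (x, y) L' /\ incl L L'.
Proof.
  intros Hback HL.
  destruct (matching_extend _ (swap_pairs L) y Hback (matching_swap _ _ HL))
    as [x [L' [HL' [Hyx Hincl]]]].
  exists x, (swap_pairs L'). split; [|split].
  - exact (matching_swap _ _ HL').
  - now apply in_swap_pairs.
  - intros p Hp. apply in_swap_pairs, Hincl, in_swap_pairs. now destruct p.
Qed.

Section PositiveTransfer.
Context {A B : Type} (R : A -> A -> Prop) (Sg : B -> B -> Prop) (M : A -> B -> Prop).
Hypothesis Hhom : forall x x' y y', M x y -> M x' y' -> (x = x' <-> y = y') -> R x x' -> Sg y y'.
Hypotheses (Hforth : forth_closed M) (Hback : forth_closed (fun y x => M x y)).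

Lemma positive_transfer p : positive p ->
  forall a b, (exists L, matching M L /\ forall i, In (a i, b i) L) -> sat R a p -> sat Sg b p.
Proof.
  induction 1 as [i j|i j|i j|I ps _ IH|I ps _ IH|i p _ IH|i p _ IH];
    intros a b [L [HL Hab]]; pose proof HL as [_ [Hinj HM]]; simpl.
  - exact (proj1 (Hinj _ _ (Hab i) (Hab j))).
  - exact (Hhom _ _ _ _ (HM _ (Hab i)) (HM _ (Hab j)) (Hinj _ _ (Hab i) (Hab j))).
  - intros Hneq Heq. apply Hneq, (Hinj _ _ (Hab i) (Hab j)), Heq.
  - intros Ha k. apply (IH k a); eauto.
  - intros [k Ha]. exists k. apply (IH k a); eauto.
  - intros Ha y. destruct (matching_extend_back M L y Hback HL) as [x [L' [HL' [Hxy Hincl]]]].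
    apply (IH (upd a i x)); auto. exists L'. split; auto. apply upd_in_pairs; auto.
  - intros [x Ha]. destruct (matching_extend M L x Hforth HL) as [y [L' [HL' [Hxy Hincl]]]].
    exists y. apply (IH (upd a i x)); auto. exists L'. split; auto. apply upd_in_pairs; auto.
Qed.

Lemma positive_sentence_transfer p : sentence p -> positive p ->
  (forall a, sat R a p) -> forall b, sat Sg b p.
Proof.
  intros Hs Hp Ha b.
  rewrite (sat_free_agree Sg p b (fun _ => b 0)) by (intros v Hv; destruct (Hs v Hv)).
  destruct (matching_extend_back M [] (b 0) Hback) as [x [L [HL [Hx _]]]].
  { split; [constructor | split; [intros ? ? [] | intros ? []]]. }
  apply (positive_transfer p Hp (fun _ => x)); auto. now exists L.
Qed.

End PositiveTransfer.

Lemma fresh_same_size {A B} (R : A -> A -> Prop) (Sg : B -> B -> Prop) (M : A -> B -> Prop) L x n :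
  standard R -> standard Sg ->
  (forall x y n, 2 <= n -> M x y -> (class_size R n x <-> class_size Sg n y)) ->
  matching M L -> ~ In x (map fst L) -> 2 <= n -> class_size R n x ->
  exists y, ~ In y (map snd L) /\ class_size Sg n y.
Proof.
  intros HR HS HMsize [HN [Hinj HM]] Hx Hn Hxn.
  destruct (std_size Sg HS n Hn) as [y0 Hy0].
  destruct (fresh_partner R Sg L x y0 (std_equiv R HR) HN Hinj Hx) as [y [Hy Hfresh]].
  - intros m _ Hm. apply (class_size_ge _ n m _ Hy0), (class_size_ge _ n m _ Hxn), Hm.
  - intros q Hq Hyq. apply (std_size_unique R HR n); auto.
    apply (HMsize _ _ n Hn (HM q Hq)). now apply (class_size_rel Sg (std_equiv Sg HS) n y0).
  - exists y. split; auto. now apply (class_size_rel Sg (std_equiv Sg HS) n y0).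
Qed.

Section PositiveEquivalence.
Context {X Y : Type} (rho : X -> X -> Prop) (sigma : Y -> Y -> Prop).
Hypotheses (GX : standard rho) (GY : standard sigma).
Variable x0 : X.
Hypotheses (HX0 : class_unbounded rho x0)
  (HXinf : forall x, class_unbounded rho x -> rho x0 x).
Variables y1 y2 : Y.
Hypotheses (HY1 : class_unbounded sigma y1) (HY2 : class_unbounded sigma y2)
  (HYinf : forall y, class_unbounded sigma y -> sigma y1 y \/ sigma y2 y).

Definition match_XY (x : X) (y : Y) : Prop :=
  (rho x0 x /\ sigma y1 y) \/
  (exists n, 2 <= n /\ class_size rho n x /\ class_size sigma n y) \/
  (class_size rho 1 x /\ (class_size sigma 1 y \/ sigma y2 y)).

Definition match_YX (y : Y) (x : X) : Prop :=
  ((sigma y1 y \/ sigma y2 y) /\ rho x0 x) \/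
  (exists n, 1 <= n /\ class_size sigma n y /\ class_size rho n x).

Let ERho := std_equiv rho GX.
Let ESigma := std_equiv sigma GY.

Lemma match_XY_size x y n : 2 <= n -> match_XY x y ->
  (class_size rho n x <-> class_size sigma n y).
Proof.
  intros Hn [[Hx Hy]|[[m [_ [Hx Hy]]]|[Hx [Hy|Hy]]]].
  - split; intro H; exfalso;
      [exact (unbounded_not_size rho ERho x0 x n HX0 Hx H)
      | exact (unbounded_not_size sigma ESigma y1 y n HY1 Hy H)].
  - split; intro H.
    + now rewrite (class_size_unique rho _ _ _ H Hx).
    + now rewrite (class_size_unique sigma _ _ _ H Hy).
  - split; intro H; [pose proof (class_size_unique _ _ _ _ H Hx)
                    | pose proof (class_size_unique _ _ _ _ H Hy)]; lia.
  - split; intro H.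
    + pose proof (class_size_unique _ _ _ _ H Hx). lia.
    + exfalso. exact (unbounded_not_size sigma ESigma y2 y n HY2 Hy H).
Qed.

Lemma match_YX_size y x n : 2 <= n -> match_YX y x ->
  (class_size sigma n y <-> class_size rho n x).
Proof.
  intros Hn [[Hy Hx]|[m [_ [Hy Hx]]]].
  - split; intro H; exfalso.
    + destruct Hy as [Hy|Hy]; [exact (unbounded_not_size sigma ESigma y1 y n HY1 Hy H)
                             | exact (unbounded_not_size sigma ESigma y2 y n HY2 Hy H)].
    + exact (unbounded_not_size rho ERho x0 x n HX0 Hx H).
  - split; intro H.
    + now rewrite (class_size_unique sigma _ _ _ H Hy).
    + now rewrite (class_size_unique rho _ _ _ H Hx).
Qed.

Lemma match_XY_hom x x' y y' : match_XY x y -> match_XY x' y' ->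
  (x = x' <-> y = y') -> rho x x' -> sigma y y'.
Proof.
  pose proof ERho as [Rrefl [Rsym Rtr]]. pose proof ESigma as [Srefl [Ssym Str]].
  intros Hm Hm' Hinj Hxx'.
  destruct Hm as [[Hx Hy]|[[n [Hn [Hx Hy]]]|[Hx _]]].
  - destruct Hm' as [[Hx' Hy']|[[m [_ [Hx' _]]]|[Hx' _]]]; [eauto| |];
      exfalso; exact (unbounded_not_size rho ERho x0 x' _ HX0 (Rtr _ _ _ Hx Hxx') Hx').
  - apply (std_size_unique sigma GY n); auto.
    apply (match_XY_size x' y' n Hn Hm'). now apply (class_size_rel rho ERho n x).
  - assert (x' = x) by exact (class_size_1_eq rho x x' Hx Hxx' (Rrefl x)).
    subst x'. replace y' with y by (apply Hinj; reflexivity). apply Srefl.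
Qed.

Lemma match_YX_hom y y' x x' : match_YX y x -> match_YX y' x' ->
  (y = y' <-> x = x') -> sigma y y' -> rho x x'.
Proof.
  pose proof ERho as [Rrefl [Rsym Rtr]]. pose proof ESigma as [Srefl [Ssym Str]].
  intros Hm Hm' Hinj Hyy'.
  destruct Hm as [[Hy Hx]|[[|[|n]] [Hn [Hy Hx]]]]; [|lia| |].
  - destruct Hm' as [[_ Hx']|[m [_ [Hy' _]]]]; [eauto|exfalso].
    destruct Hy as [Hy|Hy];
      [exact (unbounded_not_size sigma ESigma y1 y' m HY1 (Str _ _ _ Hy Hyy') Hy')
      | exact (unbounded_not_size sigma ESigma y2 y' m HY2 (Str _ _ _ Hy Hyy') Hy')].
  - assert (y' = y) by exact (class_size_1_eq sigma y y' Hy Hyy' (Srefl y)).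
    subst y'. replace x' with x by (apply Hinj; reflexivity). apply Rrefl.
  - apply (std_size_unique rho GX (S (S n))); [lia|auto|].
    apply (match_YX_size y' x' (S (S n))); [lia|auto|].
    now apply (class_size_rel sigma ESigma _ y).
Qed.

Lemma match_XY_forth : forth_closed match_XY.
Proof.
  intros L x HL Hx.
  destruct (unbounded_or_size rho x (proj1 ERho x)) as [Hxu|[[|[|n]] [Hn Hxs]]]; [|lia| |].
  - destruct (exists_fresh sigma _ y1 (map snd L) (HY1 (S (length (map snd L)))))
      as [y [Hy Hfresh]]; auto.
    exists y. split; auto. left; auto.
  - destruct (std_singleton sigma GY (map snd L)) as [y [Hy Hfresh]].
    exists y. split; auto. right; right; auto.
  - destruct (fresh_same_size rho sigma match_XY L x (S (S n)) GX GY match_XY_size HL Hx)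
      as [y [Hfresh Hy]]; [lia|auto|].
    exists y. split; auto. right; left. exists (S (S n)). split; [lia|auto].
Qed.

Lemma match_XY_back : forth_closed (fun y x => match_XY x y).
Proof.
  intros L y HL Hy.
  destruct (unbounded_or_size sigma y (proj1 ESigma y)) as [Hyu|[[|[|n]] [Hn Hys]]]; [|lia| |].
  - destruct (HYinf y Hyu) as [Hy1|Hy2].
    + destruct (exists_fresh rho _ x0 (map snd L) (HX0 (S (length (map snd L)))))
        as [x [Hx Hfresh]]; auto.
      exists x. split; auto. left; auto.
    + destruct (std_singleton rho GX (map snd L)) as [x [Hx Hfresh]].
      exists x. split; auto. right; right; auto.
  - destruct (std_singleton rho GX (map snd L)) as [x [Hx Hfresh]].
    exists x. split; auto. right; right; auto.
  - destruct (fresh_same_size sigma rho (fun y x => match_XY x y) L y (S (S n)) GY GX)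
      as [x [Hfresh Hx]]; auto; [|lia|].
    { intros y' x' m Hm Hxy. symmetry. now apply match_XY_size. }
    exists x. split; auto. right; left. exists (S (S n)). split; [lia|auto].
Qed.

Lemma match_YX_forth : forth_closed match_YX.
Proof.
  intros L y HL Hy.
  destruct (unbounded_or_size sigma y (proj1 ESigma y)) as [Hyu|[[|[|n]] [Hn Hys]]]; [|lia| |].
  - destruct (exists_fresh rho _ x0 (map snd L) (HX0 (S (length (map snd L)))))
      as [x [Hx Hfresh]]; auto.
    exists x. split; auto. left; auto.
  - destruct (std_singleton rho GX (map snd L)) as [x [Hx Hfresh]].
    exists x. split; auto. right. exists 1; auto.
  - destruct (fresh_same_size sigma rho match_YX L y (S (S n)) GY GX match_YX_size HL Hy)
      as [x [Hfresh Hx]]; [lia|auto|].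
    exists x. split; auto. right. exists (S (S n)). split; [lia|auto].
Qed.

Lemma match_YX_back : forth_closed (fun x y => match_YX y x).
Proof.
  intros L x HL Hx.
  destruct (unbounded_or_size rho x (proj1 ERho x)) as [Hxu|[[|[|n]] [Hn Hxs]]]; [|lia| |].
  - destruct (exists_fresh sigma _ y1 (map snd L) (HY1 (S (length (map snd L)))))
      as [y [Hy Hfresh]]; auto.
    exists y. split; auto. left; auto.
  - destruct (std_singleton sigma GY (map snd L)) as [y [Hy Hfresh]].
    exists y. split; auto. right. exists 1; auto.
  - destruct (fresh_same_size rho sigma (fun x y => match_YX y x) L x (S (S n)) GX GY)
      as [y [Hfresh Hy]]; auto; [|lia|].
    { intros x' y' m Hm Hyx. symmetry. now apply match_YX_size. }
    exists y. split; auto. right. exists (S (S n)). split; [lia|auto].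
Qed.

Lemma positive_equivalence : pos_equiv rho sigma.
Proof.
  intros p Hs Hp. split.
  - exact (positive_sentence_transfer rho sigma match_XY match_XY_hom
             match_XY_forth match_XY_back p Hs Hp).
  - exact (positive_sentence_transfer sigma rho match_YX match_YX_hom
             match_YX_forth match_YX_back p Hs Hp).
Qed.

End PositiveEquivalence.

(** * Condensations *)

Lemma countable_of_lists {A} (P : A -> Prop) (enum : nat -> list A) :
  (forall x, P x -> exists n, In x (enum n)) ->
  exists g : A -> nat, forall x x', P x -> P x' -> g x = g x' -> x = x'.
Proof.
  intros Henum.
  set (pos x := epsilon (inhabits (0, 0)) (fun nk => nth_error (enum (fst nk)) (snd nk) = Some x)).
  assert (Hpos : forall x, P x -> nth_error (enum (fst (pos x))) (snd (pos x)) = Some x).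
  { intros x Hx. apply (epsilon_spec (inhabits (0, 0))
      (fun nk => nth_error (enum (fst nk)) (snd nk) = Some x)).
    destruct (Henum x Hx) as [n Hn]. destruct (In_nth_error _ _ Hn) as [k Hk].
    now exists (n, k). }
  exists (fun x => Cantor.to_nat (pos x)). intros x x' Hx Hx' Heq.
  apply (f_equal Cantor.of_nat) in Heq. rewrite !Cantor.cancel_of_to in Heq.
  pose proof (Hpos x Hx) as E. rewrite Heq, (Hpos x' Hx') in E. now injection E.
Qed.

Lemma finite_part_countable {A} (R : A -> A -> Prop) :
  standard R -> countably_infinite (singleton_pts R) ->
  exists g : A -> nat, forall x x', (exists n, class_size R n x) -> (exists n, class_size R n x') ->
    g x = g x' -> x = x'.
Proof.
  intros HR [f [_ Hsurj]]. pose proof (std_equiv R HR) as [Rrefl _].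
  assert (Hlists : forall n, exists l, 2 <= n -> forall w, class_size R n w -> In w l).
  { intro n. destruct (le_lt_dec 2 n) as [Hn|Hn]; [|exists []; lia].
    destruct (std_size R HR n Hn) as [z Hz]. destruct (class_size_list R n z Hz) as [l [_ [_ Hl]]].
    exists l. intros _ w Hw. apply Hl, (std_size_unique R HR n); auto. }
  destruct (choice _ Hlists) as [l Hl].
  apply (countable_of_lists _ (fun n => proj1_sig (f n) :: l n)).
  intros x [[|[|n]] Hx].
  - exfalso. apply (proj2 Hx), class_ge_1, Rrefl.
  - assert (Hsingle : forall y, R x y -> y = x) by (intros y Hy; exact (class_size_1_eq R x y Hx Hy (Rrefl x))).
    destruct (Hsurj (exist _ x Hsingle)) as [k Hk]. exists k. left. now rewrite Hk.
  - exists (S (S n)). right. apply Hl; auto; lia.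
Qed.

Lemma no_condensation {X Y} (rho : X -> X -> Prop) (sigma : Y -> Y -> Prop) x0 y1 y2 :
  standard rho -> is_equivalence sigma -> countably_infinite (singleton_pts rho) ->
  (forall x, class_unbounded rho x -> rho x0 x) ->
  ~ sigma y1 y2 -> size_omega1 (cls sigma y1) -> size_omega1 (cls sigma y2) ->
  ~ condensable rho sigma.
Proof.
  intros HR [_ [Ssym Str]] Hsingles HXinf H12 Hy1 Hy2 [F [_ [Fsurj Fhom]]].
  pose proof (std_equiv rho HR) as [Rrefl _].
  destruct (finite_part_countable rho HR Hsingles) as [g Hg].
  destruct (choice _ Fsurj) as [G HG].
  assert (Hyk : exists yk, size_omega1 (cls sigma yk) /\ ~ sigma (F x0) yk)
    by (destruct (classic (sigma (F x0) y2));
        [exists y1; split; [exact Hy1 | intro; apply H12; eauto] | exists y2; auto]).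
  destruct Hyk as [yk [[lt [_ [_ [_ [_ [Hunc _]]]]]] Hyk]]. apply Hunc.
  exists (fun c => g (G (proj1_sig c))). intros [z Hz] [z' Hz'] Heq. apply sig_eq; simpl in *.
  assert (Hfinite : forall z, sigma yk z -> exists n, class_size rho n (G z)).
  { intros w Hw. destruct (unbounded_or_size rho (G w) (Rrefl _)) as [Hu|[n [_ Hn]]]; eauto.
    exfalso. apply Hyk, Str with w; auto. rewrite <- (HG w). apply Fhom, HXinf, Hu. }
  rewrite <- (HG z), <- (HG z'). f_equal. apply Hg; auto.
Qed.

(** * A separating sentence of L_{infinity omega} *)

Definition fAnd2 (p q : formula) : formula := fAnd bool (fun b => if b then p else q).

Fixpoint ex_block (k n : nat) (f : formula) : formula :=
  match n with 0 => f | S n => fEx k (ex_block (S k) n f) end.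

Fixpoint upd_block {A} (a : nat -> A) (k : nat) (l : list A) : nat -> A :=
  match l with [] => a | x :: l => upd_block (upd a k x) (S k) l end.

(* The witnesses of [ex_block 2 n] occupy the variables [2], ..., [n + 1]. *)
Definition vars_distinct (n : nat) : formula :=
  fAnd {ij : nat * nat | fst ij < snd ij < n}
    (fun ij => fNot (fEq (2 + fst (proj1_sig ij)) (2 + snd (proj1_sig ij)))).

Definition vars_related (v n : nat) : formula :=
  fAnd {i : nat | i < n} (fun i => fR v (2 + proj1_sig i)).

Definition class_ge_formula (v n : nat) : formula :=
  ex_block 2 n (fAnd2 (vars_distinct n) (vars_related v n)).

Definition unbounded_formula (v : nat) : formula := fAnd nat (class_ge_formula v).

Definition two_unbounded_classes : formula :=
  fEx 0 (fEx 1 (fAnd2 (fNot (fR 0 1)) (fAnd2 (unbounded_formula 0) (unbounded_formula 1)))).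

Section Satisfaction.
Context {A : Type} (R : A -> A -> Prop).

Lemma sat_fAnd2 a p q : sat R a (fAnd2 p q) <-> sat R a p /\ sat R a q.
Proof. split; [intro H; exact (conj (H true) (H false)) | intros [Hp Hq] []; assumption]. Qed.

Lemma sat_ex_block n : forall k a f,
  sat R a (ex_block k n f) <-> exists l, length l = n /\ sat R (upd_block a k l) f.
Proof.
  induction n as [|n IH]; intros k a f; simpl.
  - split; [now exists [] | intros [[|] [Hl H]]; [exact H | discriminate]].
  - split.
    + intros [x [l [Hl H]]%IH]. exists (x :: l). simpl; auto.
    + intros [[|x l] [Hl H]]; [discriminate|]. exists x. apply IH. exists l. simpl in *; auto.
Qed.

Lemma upd_block_below (l : list A) : forall a k i, i < k -> upd_block a k l i = a i.
Proof.
  induction l as [|x l IH]; intros a k i Hi; simpl; auto.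
  rewrite IH by lia. unfold upd. destruct (Nat.eqb_spec i k); [lia|auto].
Qed.

Lemma upd_block_nth (l : list A) : forall a k j d, j < length l -> upd_block a k l (k + j) = nth j l d.
Proof.
  induction l as [|x l IH]; intros a k j d Hj; simpl in *; [lia|].
  destruct j as [|j].
  - rewrite upd_block_below by lia. unfold upd. now rewrite Nat.add_0_r, Nat.eqb_refl.
  - replace (k + S j) with (S k + j) by lia. apply IH; lia.
Qed.

Lemma sat_class_ge_formula a v n : v < 2 -> (sat R a (class_ge_formula v n) <-> class_ge R n (a v)).
Proof.
  intro Hv. unfold class_ge_formula. rewrite sat_ex_block.
  assert (Hvar : forall l j, j < length l -> upd_block a 2 l (S (S j)) = nth j l (a v))
    by (intros l j Hj; exact (upd_block_nth l a 2 j (a v) Hj)).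
  split.
  - intros [l [Hl [Hdist Hrel]%sat_fAnd2]]. simpl in Hdist, Hrel. exists l. repeat split; auto.
    + apply (NoDup_nth l (a v)). intros i j Hi Hj Heq.
      destruct (Nat.lt_total i j) as [Hij|[Hij|Hij]]; auto; exfalso.
      * apply (Hdist (exist _ (i, j) (conj Hij (ltac:(lia) : j < n)))). simpl.
        now rewrite !Hvar by lia.
      * apply (Hdist (exist _ (j, i) (conj Hij (ltac:(lia) : i < n)))). simpl.
        now rewrite !Hvar by lia.
    + intros w Hw. destruct (In_nth l w (a v) Hw) as [i [Hi <-]].
      specialize (Hrel (exist _ i (ltac:(lia) : i < n))). simpl in Hrel.
      now rewrite upd_block_below, Hvar in Hrel by lia.
  - intros [l [Hl [Hlen Hrel]]]. exists l. split; auto. apply sat_fAnd2. simpl. split.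
    + intros [[i j] [Hij Hj]]. simpl in *. rewrite !Hvar by lia. intro Heq.
      apply (NoDup_nth l (a v)) in Heq; auto; lia.
    + intros [i Hi]. simpl. rewrite upd_block_below, Hvar by lia. apply Hrel, nth_In; lia.
Qed.

Lemma sat_two_unbounded_classes a :
  sat R a two_unbounded_classes <->
  exists x x', ~ R x x' /\ class_unbounded R x /\ class_unbounded R x'.
Proof.
  unfold two_unbounded_classes. simpl. split.
  - intros [x [x' [Hxx' [H0 H1]%sat_fAnd2]%sat_fAnd2]]. exists x, x'.
    split; [exact Hxx'|split]; intro n;
      [specialize (H0 n); apply sat_class_ge_formula in H0
      | specialize (H1 n); apply sat_class_ge_formula in H1]; auto.
  - intros [x [x' [Hxx' [H0 H1]]]]. exists x, x'. apply sat_fAnd2. split; [exact Hxx'|].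
    apply sat_fAnd2. split; intro n; apply sat_class_ge_formula; auto.
Qed.

End Satisfaction.

Definition free_shape (v : nat) (f : formula) : Prop :=
  match f with
  | fEq i j | fR i j => v = i \/ v = j
  | fNot p => free v p
  | fAnd _ ps | fOr _ ps => exists k, free v (ps k)
  | fAll i p | fEx i p => v <> i /\ free v p
  end.

Lemma free_shape_of_free v f : free v f -> free_shape v f.
Proof. destruct 1; simpl; eauto. Qed.

Lemma free_fAnd2 v p q : free v (fAnd2 p q) -> free v p \/ free v q.
Proof. intros [[|] H]%free_shape_of_free; auto. Qed.

Lemma free_ex_block v n : forall k f, free v (ex_block k n f) -> free v f /\ (v < k \/ k + n <= v).
Proof.
  induction n as [|n IH]; intros k f H; simpl in H; [split; auto; lia|].
  apply free_shape_of_free in H as [Hvk [Hf Hv]%IH]. split; auto; lia.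
Qed.

Lemma free_class_ge_formula v w n : free v (class_ge_formula w n) -> v = w.
Proof.
  intros [[Hd|Hr]%free_fAnd2 Hv]%free_ex_block.
  - apply free_shape_of_free in Hd as [[[i j] [Hij Hj]] Hd]. simpl in *.
    apply free_shape_of_free, free_shape_of_free in Hd. simpl in Hd. lia.
  - apply free_shape_of_free in Hr as [[i Hi] Hr]. simpl in *.
    apply free_shape_of_free in Hr. simpl in Hr. lia.
Qed.

Lemma two_unbounded_classes_sentence : sentence two_unbounded_classes.
Proof.
  intros v H. apply free_shape_of_free in H as [H0 H]. apply free_shape_of_free in H as [H1 H].
  apply free_fAnd2 in H as [H|[H|H]%free_fAnd2].
  - apply free_shape_of_free, free_shape_of_free in H. simpl in H. lia.
  - apply free_shape_of_free in H as [n H%free_class_ge_formula]. lia.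
  - apply free_shape_of_free in H as [n H%free_class_ge_formula]. lia.
Qed.

Lemma one_unbounded_class_not_sat {A} (R : A -> A -> Prop) x0 a :
  is_equivalence R -> (forall x, class_unbounded R x -> R x0 x) ->
  ~ sat R a two_unbounded_classes.
Proof.
  intros [_ [Rsym Rtr]] Hunique [x [x' [Hxx' [Hx Hx']]]]%sat_two_unbounded_classes.
  apply Hxx', Rtr with x0; auto.
Qed.

Theorem mainTheorem16 (X : Type) (rho : X -> X -> Prop) (Y : Type) (sigma : Y -> Y -> Prop) :
  size_omega1 X -> size_omega1 Y ->
  is_equivalence rho -> is_equivalence sigma ->
  finite_classes_spec rho -> finite_classes_spec sigma ->
  (exists x0 : X, size_omega1 (cls rho x0) /\
     (forall x, infinite_class rho x -> rho x0 x)) ->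
  (exists y1 y2 : Y, ~ sigma y1 y2 /\
     size_omega1 (cls sigma y1) /\ size_omega1 (cls sigma y2) /\
     (forall y, infinite_class sigma y -> sigma y1 y \/ sigma y2 y)) ->
  elem_equiv rho sigma /\ pos_equiv rho sigma /\
  ~ bi_condensable rho sigma /\ ~ infeq rho sigma.
Proof.
  intros _ _ Hrho Hsigma Hspec_rho Hspec_sigma
    [x0 [Hx0 Hx0_inf]] [y1 [y2 [H12 [Hy1 [Hy2 Hy_inf]]]]].
  pose proof (finite_classes_spec_standard rho Hrho Hspec_rho) as GX.
  pose proof (finite_classes_spec_standard sigma Hsigma Hspec_sigma) as GY.
  assert (HX0 : class_unbounded rho x0) by (apply size_omega1_unbounded; [exact (proj1 Hrho x0) | exact Hx0]).
  assert (HY1 : class_unbounded sigma y1) by (apply size_omega1_unbounded; [exact (proj1 Hsigma y1) | exact Hy1]).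
  assert (HY2 : class_unbounded sigma y2) by (apply size_omega1_unbounded; [exact (proj1 Hsigma y2) | exact Hy2]).
  assert (HXinf : forall x, class_unbounded rho x -> rho x0 x)
    by (intros x Hx; apply Hx0_inf, unbounded_infinite_class, Hx).
  assert (HYinf : forall y, class_unbounded sigma y -> sigma y1 y \/ sigma y2 y)
    by (intros y Hy; apply Hy_inf, unbounded_infinite_class, Hy).
  split; [now apply standard_elem_equiv|].
  split; [exact (positive_equivalence rho sigma GX GY x0 HX0 HXinf y1 y2 HY1 HY2 HYinf)|].
  split.
  - intros [HF _].
    exact (no_condensation rho sigma x0 y1 y2 GX Hsigma (proj1 Hspec_rho) HXinf H12 Hy1 Hy2 HF).
  - intros Hequiv. apply (one_unbounded_class_not_sat rho x0 (fun _ => x0) Hrho HXinf).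
    apply (Hequiv _ two_unbounded_classes_sentence).
    intro b. apply sat_two_unbounded_classes. now exists y1, y2.
Qed.
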